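(* Let $S\subseteq\mathbb{N}^d$ be a GNS. Then $\tau(S)\le t(S)$, and $\tau(S)=t(S)$ holds if and only if for every $x\in\mathcal{H}(S)$ there exists a Frobenius allowable gap $F$ of $S$ with $F-x\in S$.
   Context: $\mathbb{N}=\{0,1,2,\dots\}$. A GNS is a submonoid $S\subseteq\mathbb{N}^d$ with finite complement $\mathcal{H}(S)=\mathbb{N}^d\setminus S$ (gaps). A relaxed monomial order is a total order $\prec$ on $\mathbb{N}^d$ with (i) $v\prec w\Rightarrow v\prec w+u$ for all $u\in\mathbb{N}^d$, (ii) $0\prec v$ for all $v\neq 0$. A gap is Frobenius allowable if it equals $\max_\prec\mathcal{H}(S)$ for some relaxed monomial order $\prec$; $FA(S)$ denotes the set of Frobenius allowable gaps and $\tau(S)=|FA(S)|$. A gap $P$ is pseudo-Frobenius if $P+s\in S$ for all nonzero $s\in S$; $PF(S)$ is the set of these and $t(S)=|PF(S)|$ is the type. The condition $F-x\in S$ means $F-x\in\mathbb{N}^d$ and lies in $S$. *)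

From mathcomp Require Import all_boot.
From mathcomp Require Import finmap.
From mathcomp Require Import boolp classical_sets cardinality.
Set Implicit Arguments. Unset Strict Implicit. Unset Printing Implicit Defensive.

Definition vec (d : nat) := {ffun 'I_d -> nat}.

Definition vzero (d : nat) : vec d := [ffun _ => 0%N].
Definition vadd (d : nat) (v w : vec d) : vec d := [ffun i => (v i + w i)%N].

(* componentwise difference F - x, meaningful when x <= F componentwise *)
Definition vle (d : nat) (x F : vec d) : Prop := forall i, (x i <= F i)%N.
Definition vsub (d : nat) (F x : vec d) : vec d := [ffun i => (F i - x i)%N].

Definition is_GNS (d : nat) (S : set (vec d)) : Prop :=
  S (vzero d) /\ (forall v w, S v -> S w -> S (vadd v w)) /\
  finite_set (~` S).

Definition gaps (d : nat) (S : set (vec d)) : set (vec d) := ~` S.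

Definition relaxed_monomial_order (d : nat) (lt : vec d -> vec d -> Prop) : Prop :=
  (forall v, ~ lt v v) /\
  (forall u v w, lt u v -> lt v w -> lt u w) /\
  (forall v w, v <> w -> lt v w \/ lt w v) /\
  (forall v w u, lt v w -> lt v (vadd w u)) /\
  (forall v, v <> vzero d -> lt (vzero d) v).

Definition is_max_gap (d : nat) (lt : vec d -> vec d -> Prop)
    (S : set (vec d)) (F : vec d) : Prop :=
  gaps S F /\ (forall g, gaps S g -> g <> F -> lt g F).

Definition FA (d : nat) (S : set (vec d)) : set (vec d) :=
  [set F | exists lt, relaxed_monomial_order lt /\ is_max_gap lt S F].

Definition PF (d : nat) (S : set (vec d)) : set (vec d) :=
  [set P | gaps S P /\ (forall s, S s -> s <> vzero d -> S (vadd P s))].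

Definition tau (d : nat) (S : set (vec d)) : nat := #|` fset_set (FA S)|.
Definition type_t (d : nat) (S : set (vec d)) : nat := #|` fset_set (PF S)|.

(* "F - x in S": F - x lies in N^d and belongs to S *)
Definition diff_in (d : nat) (S : set (vec d)) (F x : vec d) : Prop :=
  vle x F /\ S (vsub F x).

From mathcomp Require Import all_boot.
From mathcomp Require Import finmap.
From mathcomp Require Import boolp classical_sets cardinality.
From mathcomp Require Import zify.
Set Implicit Arguments. Unset Strict Implicit. Unset Printing Implicit Defensive.

(* 1. FA(S) is contained in PF(S): if F is the maximum gap for a relaxed
      monomial order and s \in S \ {0}, then F + s is larger than F, hence
      not a gap.  As both sets are finite, tau(S) <= t(S), with equality
      iff FA(S) = PF(S).
   2. Every gap x lies below some pseudo-Frobenius gap P, i.e. P - x \in S: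
      among the gaps g with g - x \in S pick one of maximal coordinate sum;
      were it not pseudo-Frobenius, some g + s (s \in S \ {0}) would be a
      gap of larger sum still above x.
   3. Conversely, if every gap lies below a Frobenius allowable gap, then
      each P \in PF(S) is such a gap: for F \in FA(S) with F - P \in S,
      either F = P, or P + (F - P) = F would lie in S.                     *)

Local Open Scope classical_set_scope.

Section VectorArithmetic.
Variable d : nat.
Implicit Types x y F s : vec d.

Lemma vadd_subK x F : vle x F -> vadd x (vsub F x) = F.
Proof. by move=> le_xF; apply/ffunP => i; rewrite !ffunE subnKC. Qed.

Lemma vsub_vadd x y s : vle x y -> vsub (vadd y s) x = vadd (vsub y x) s.
Proof. by move=> le_xy; apply/ffunP => i; rewrite !ffunE addnBAC. Qed.

Lemma vsubvv x : vsub x x = vzero d.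
Proof. by apply/ffunP => i; rewrite !ffunE subnn. Qed.

Lemma vadd_eq_left F s : vadd F s = F -> s = vzero d.
Proof.
move=> eFs; apply/ffunP => i; have := congr1 (fun f : vec d => f i) eFs.
by rewrite !ffunE => /eqP; rewrite -[X in _ == X]addn0 eqn_add2l => /eqP.
Qed.

Lemma vsub_eq0 x F : vle x F -> vsub F x = vzero d -> x = F.
Proof.
move=> le_xF e0; apply/ffunP => i; have := congr1 (fun f : vec d => f i) e0.
rewrite !ffunE => /eqP; rewrite subn_eq0 => le_Fx.
by apply/eqP; rewrite eqn_leq le_xF.
Qed.

Definition weight (g : vec d) : nat := \sum_(i < d) g i.

Lemma weight_add x s : weight (vadd x s) = weight x + weight s.
Proof. by rewrite /weight -big_split; apply: eq_bigr => i _; rewrite ffunE. Qed.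

Lemma weight_gt0 s : s <> vzero d -> 0 < weight s.
Proof.
move=> s_neq0; have [i si_neq0] : exists i, s i <> 0.
  apply: contrapT => /forallNP s0; apply: s_neq0; apply/ffunP => i.
  by rewrite ffunE; apply: contrapT; apply: s0.
by rewrite /weight (bigD1 i) //=; lia.
Qed.

End VectorArithmetic.

Lemma bounded_ascent (T : Type) (P Q : T -> Prop) (w : T -> nat) (B : nat) x0 :
  P x0 -> (forall x, P x -> w x <= B) ->
  (forall x, P x -> ~ Q x -> exists2 y, P y & w x < w y) ->
  exists2 x, P x & Q x.
Proof.
move=> Px0 bounded ascend.
suff climb : forall k x, P x -> B - w x <= k -> exists2 x, P x & Q x.
  exact: (climb _ _ Px0 (leqnn _)).
elim=> [|k IH] x Px Hk; have [Qx|nQx] := pselect (Q x); try by exists x.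
all: have [y Py lt_xy] := ascend _ Px nQx; have := bounded _ Py.
  by lia.
by move=> le_yB; apply: (IH y) => //; lia.
Qed.

Lemma card_fset_set_sub (T : choiceType) (A B : set T) :
  A `<=` B -> finite_set B ->
  (#|` fset_set A| <= #|` fset_set B|)%N /\
  (#|` fset_set A| = #|` fset_set B| <-> A = B).
Proof.
move=> sAB finB; have finA := sub_finite_set sAB finB.
have fsAB : (fset_set A `<=` fset_set B)%fset by rewrite -fset_set_sub.
split; first exact: fsubset_leq_card.
split=> [eAB|-> //]; apply: fset_set_inj => //; apply/eqP.
by rewrite -(fsubset_leqif_cards fsAB).2; apply/eqP.
Qed.

Section GNS.
Variables (d : nat) (S : set (vec d)).
Hypothesis hS : is_GNS S.

Lemma finite_gaps : finite_set (gaps S).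
Proof. by case: hS => _ []. Qed.

Lemma finite_PF : finite_set (PF S).
Proof. by apply: (sub_finite_set _ finite_gaps) => g []. Qed.

(* Step 1: a Frobenius allowable gap F is pseudo-Frobenius, since for
   s \in S \ {0} the element F + s exceeds F in the order. *)
Lemma FA_sub_PF : FA S `<=` PF S.
Proof.
move=> F [lt [[irr [_ [_ [lt_add _]]]] [gapF maxF]]]; split => // s Ss s_neq0.
apply: contrapT => gap_Fs.
have neq_F : vadd F s <> F by move/vadd_eq_left.
exact: irr (lt_add _ _ s (maxF _ gap_Fs neq_F)).
Qed.

Lemma gap_below_PF x : gaps S x -> exists P, PF S P /\ diff_in S P x.
Proof.
move=> gap_x; pose above := [set g | gaps S g /\ diff_in S g x].
have fin_above : finite_set above by apply: (sub_finite_set _ finite_gaps) => g [].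
have above_x : above x.
  by split => //; split => [i //|]; rewrite vsubvv; case: hS.
have bounded : forall g, above g -> weight g <= \max_(h <- fset_set above) weight h.
  by move=> g ag; apply: leq_bigmax_seq => //; rewrite in_fset_set // inE.
have ascend : forall g, above g -> ~ PF S g ->
    exists2 g', above g' & weight g < weight g'.
  move=> g [gap_g [le_xg S_gx]] not_PF.
  have [s [Ss [s_neq0 gap_gs]]] : exists s, S s /\ s <> vzero d /\ ~ S (vadd g s).
    apply: contrapT => noS; apply: not_PF; split => // s Ss s_neq0.
    by apply: contrapT => gap_gs; apply: noS; exists s.
  exists (vadd g s); last by rewrite weight_add; have := weight_gt0 s_neq0; lia.
  split => //; split=> [i|]; first by rewrite ffunE; have := le_xg i; lia.
  by rewrite vsub_vadd //; case: hS => _ [S_add _]; apply: S_add.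
have [P [_ below_P] PF_P] := bounded_ascent above_x bounded ascend.
by exists P.
Qed.

Lemma PF_sub_FA :
  (forall x, gaps S x -> exists F, FA S F /\ diff_in S F x) -> PF S `<=` FA S.
Proof.
move=> cover P [gap_P P_add]; have [F [FA_F [le_PF S_FP]]] := cover P gap_P.
have [FP0|FP_neq0] := pselect (vsub F P = vzero d).
  by rewrite (vsub_eq0 le_PF FP0).
exfalso; apply: (FA_sub_PF FA_F).1.
by rewrite -(vadd_subK le_PF); apply: P_add.
Qed.

End GNS.

Theorem theorem3p1 (d : nat) (S : set (vec d)) (hS : is_GNS S) :
  (tau S <= type_t S)%N /\
  (tau S = type_t S <->
     (forall x, gaps S x -> exists F, FA S F /\ diff_in S F x)).
Proof.
have [le_card eq_card] := card_fset_set_sub (@FA_sub_PF d S) (finite_PF hS).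
split=> //; rewrite /tau /type_t eq_card; split=> [-> | cover].
  exact: gap_below_PF.
by apply/seteqP; split; [exact: FA_sub_PF | exact: PF_sub_FA].
Qed.
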